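(* Let $f,g\in\mathbb N\{x_1,\dots,x_n\}$ have disjoint supports, and suppose $f-g$ is a polynomial identity of the ring $M_n(\mathbb Z)$ (i.e. $f(A_1,\dots,A_n)-g(A_1,\dots,A_n)=0$ for all $A_i\in M_n(\mathbb Z)$). Then $(f,g)$ is a semiring$^\dagger$ polynomial identity of $M_n(R)$ for every commutative semiring$^\dagger$ $R$.
   Context: A semiring$^\dagger$ $(R,+,\cdot,1)$ is a set with binary operations such that $(R,+)$ is an abelian semigroup, $(R,\cdot,1)$ is a monoid, and multiplication distributes over addition (no zero element required); it is commutative if multiplication is commutative. $\mathbb N\{x_1,\dots,x_m\}$ denotes the free $\mathbb N$-semiring$^\dagger$: the monoid semiring over $\mathbb N$ of the free (word) monoid on noncommuting indeterminates $x_1,\dots,x_m$; the support of $f$ is the set of words with nonzero coefficient. A pair $(f,g)$ of elements of $\mathbb N\{x_1,\dots,x_m\}$ is a (semiring$^\dagger$) polynomial identity of a semiring$^\dagger$ $S$ if $f(r_1,\dots,r_m)=g(r_1,\dots,r_m)$ for all $r_1,\dots,r_m\in S$. $M_n(R)$ is the semiring$^\dagger$ of $n\times n$ matrices with the usual matrix operations. *)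

From HB Require Import structures.
From mathcomp Require Import all_boot all_order all_algebra.

Set Implicit Arguments.
Unset Strict Implicit.
Unset Printing Implicit Defensive.

Record csemiring_dagger := CSD {
  csd_car :> Type;
  csd_add : csd_car -> csd_car -> csd_car;
  csd_mul : csd_car -> csd_car -> csd_car;
  csd_one : csd_car;
  csd_addA : associative csd_add;
  csd_addC : commutative csd_add;
  csd_mulA : associative csd_mul;
  csd_mul1l : left_id csd_one csd_mul;
  csd_mul1r : right_id csd_one csd_mul;
  csd_mulDl : left_distributive csd_mul csd_add;
  csd_mulDr : right_distributive csd_mul csd_add;
  csd_mulC : commutative csd_mul
}.

(** * Elements of the free N-semiring^dagger N{x_1,...,x_n}:
    a finite multiset of words over 'I_n, represented as a list of words;
    the coefficient of a word w is [count_mem w f] and the support of f is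
    the set of words occurring in f. *)
Definition free_nsr (n : nat) := seq (seq 'I_n).

Definition supp_disjoint n (f g : free_nsr n) : Prop :=
  forall w : seq 'I_n, w \in f -> w \notin g.

Definition eval_int n (f : free_nsr n) (A : 'I_n -> 'M[int]_n) : 'M[int]_n :=
  (\sum_(w <- f) \prod_(x <- w) A x)%R.

(** Since R need not have a zero, the
    matrix operations (in particular the identity matrix, needed to evaluate
    the empty word, and empty sums) are computed in R with a zero adjoined
    ([option R], [None] = 0).  For matrices with entries in R and words of
    positive length this is exactly the usual arithmetic of M_n(R). *)
Section ZeroAdjoined.
Variable R : csemiring_dagger.

Definition oadd (x y : option R) : option R :=
  match x, y with
  | None, _ => y
  | _, None => x
  | Some a, Some b => Some (csd_add a b)
  end.

Definition omul (x y : option R) : option R :=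
  match x, y with
  | Some a, Some b => Some (csd_mul a b)
  | _, _ => None
  end.

Variable n : nat.

Definition omat := 'I_n -> 'I_n -> option R.

Definition omat_add (A B : omat) : omat := fun i j => oadd (A i j) (B i j).
Definition omat_mul (A B : omat) : omat :=
  fun i j => foldr (fun k acc => oadd (omul (A i k) (B k j)) acc) None (enum 'I_n).
Definition omat_one : omat := fun i j => if i == j then Some (csd_one R) else None.
Definition omat_zero : omat := fun _ _ => None.

Definition eval_word (A : 'I_n -> omat) (w : seq 'I_n) : omat :=
  foldr (fun x acc => omat_mul (A x) acc) omat_one w.

Definition eval_sr (f : free_nsr n) (A : 'I_n -> omat) : omat :=
  foldr (fun w acc => omat_add (eval_word A w) acc) omat_zero f.

End ZeroAdjoined.

Definition is_sr_identity (R : csemiring_dagger) n (f g : free_nsr n) : Prop :=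
  forall A : 'I_n -> 'I_n -> 'I_n -> R,
    let A' := fun x i j => Some (A x i j) in
    forall i j : 'I_n, eval_sr f A' i j = eval_sr g A' i j.

From HB Require Import structures.
From mathcomp Require Import all_boot all_order all_algebra.

Set Implicit Arguments.
Unset Strict Implicit.
Unset Printing Implicit Defensive.

Import GRing.Theory.

(** Entry (i, j) of a word x_1 ... x_k evaluated at matrices A is the sum,
    over all index paths i = a_0, a_1, ..., a_k = j, of the monomials
    A_{x_1}(a_0,a_1) ... A_{x_k}(a_(k-1),a_k).  Over a commutative semiring
    a monomial only depends on the multiset of its triples (x, a, b), so
    (f, g) is an identity as soon as f and g produce the same multiset of such
    multisets for every (i, j).  To read this off the integer identity,
    substitute A_x(a, b) = t ^ w(x, a, b), with weights w given by distinct
    powers of a large base D: a monomial then evaluates to t ^ e, where the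
    base-D digits of e count the triples of the multiset, and an identity of
    integer polynomials in t identifies the multisets of exponents. *)

Section OptionSemiring.
Variable R : csemiring_dagger.

Lemma oaddA : associative (@oadd R).
Proof. by move=> [x|] [y|] [z|] //=; rewrite csd_addA. Qed.

Lemma oaddC : commutative (@oadd R).
Proof. by move=> [x|] [y|] //=; rewrite csd_addC. Qed.

Lemma oadd0l : left_id None (@oadd R).
Proof. by case. Qed.

Lemma omulA : associative (@omul R).
Proof. by move=> [x|] [y|] [z|] //=; rewrite csd_mulA. Qed.

Lemma omulC : commutative (@omul R).
Proof. by move=> [x|] [y|] //=; rewrite csd_mulC. Qed.

Lemma omul1l : left_id (Some (csd_one R)) (@omul R).
Proof. by case=> //= x; rewrite csd_mul1l. Qed.

Lemma omul0l : left_zero None (@omul R).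
Proof. by []. Qed.

Lemma omul0r : right_zero None (@omul R).
Proof. by case. Qed.

Lemma omulDl : left_distributive (@omul R) (@oadd R).
Proof. by move=> [x|] [y|] [z|] //=; rewrite csd_mulDl. Qed.

Lemma omulDr : right_distributive (@omul R) (@oadd R).
Proof. by move=> [x|] [y|] [z|] //=; rewrite csd_mulDr. Qed.

HB.instance Definition _ :=
  Monoid.isComLaw.Build (option R) None (@oadd R) oaddA oaddC oadd0l.
HB.instance Definition _ :=
  Monoid.isComLaw.Build (option R) (Some (csd_one R)) (@omul R) omulA omulC omul1l.
HB.instance Definition _ := Monoid.isMulLaw.Build (option R) None (@omul R) omul0l omul0r.
HB.instance Definition _ := Monoid.isAddLaw.Build (option R) (@omul R) (@oadd R) omulDl omulDr.

End OptionSemiring.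

Section Paths.
Variable n : nat.

(* A step (x, a, b) of a path reads the entry (a, b) of the matrix A_x. *)
Definition step := ('I_n * 'I_n * 'I_n)%type.

Fixpoint word_paths (w : seq 'I_n) (i j : 'I_n) : seq (seq step) :=
  match w with
  | [::] => if i == j then [:: [::]] else [::]
  | x :: w' =>
      flatten [seq [seq (x, i, k) :: m | m <- word_paths w' k j] | k <- enum 'I_n]
  end.

Lemma word_paths_cons x w i j : word_paths (x :: w) i j =
  flatten [seq [seq (x, i, k) :: m | m <- word_paths w k j] | k <- enum 'I_n].
Proof. by []. Qed.

Definition paths (f : free_nsr n) i j := flatten [seq word_paths w i j | w <- f].

Section SemiringEvaluation.
Variables (R : csemiring_dagger) (A : 'I_n -> 'I_n -> 'I_n -> R).
Let A' x i j := Some (A x i j).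

Definition sr_monomial (m : seq step) : option R :=
  \big[@omul R/Some (csd_one R)]_(v <- m) A' v.1.1 v.1.2 v.2.

Lemma omat_mulE (B C : omat R n) i j :
  omat_mul B C i j = \big[@oadd R/None]_(k <- enum 'I_n) omul (B i k) (C k j).
Proof. by rewrite /omat_mul -(foldr_map (fun k => omul (B i k) (C k j))) foldrE big_map. Qed.

Lemma eval_word_paths w i j :
  eval_word A' w i j = \big[@oadd R/None]_(m <- word_paths w i j) sr_monomial m.
Proof.
elim: w i j => [|x w IHw] i j.
  rewrite /= /omat_one; case: (i == j); last by rewrite big_nil.
  by rewrite big_seq1 /sr_monomial big_nil.
have -> : eval_word A' (x :: w) i j = omat_mul (A' x) (eval_word A' w) i j by [].
rewrite omat_mulE word_paths_cons big_flatten [RHS]big_map; apply: eq_bigr => k _.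
rewrite IHw big_distrr big_map; apply: eq_bigr => m _.
by rewrite /sr_monomial big_cons.
Qed.

Lemma eval_sr_paths f i j :
  eval_sr f A' i j = \big[@oadd R/None]_(m <- paths f i j) sr_monomial m.
Proof.
elim: f => [|w f IHf]; first by rewrite /paths big_nil.
by rewrite /paths /= big_cat /= -IHf /omat_add eval_word_paths.
Qed.

End SemiringEvaluation.

Section RingEvaluation.
Local Open Scope ring_scope.
Variables (R : pzRingType) (A : 'I_n -> 'M[R]_n).

Definition ring_monomial (m : seq step) : R := \prod_(v <- m) A v.1.1 v.1.2 v.2.

Lemma prod_word_paths w i j :
  (\prod_(x <- w) A x) i j = \sum_(m <- word_paths w i j) ring_monomial m.
Proof.
elim: w i j => [|x w IHw] i j /=.
  rewrite big_nil -idmxE mxE; case: (i == j); last by rewrite big_nil.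
  by rewrite big_seq1 /ring_monomial big_nil.
rewrite big_cons -mulmxE mxE big_flatten /= big_map -big_enum /=.
apply: eq_bigr => k _; rewrite IHw big_map mulr_sumr.
by apply: eq_bigr => m _; rewrite /ring_monomial big_cons.
Qed.

End RingEvaluation.

Lemma eval_int_paths (f : free_nsr n) A i j :
  eval_int f A i j = (\sum_(m <- paths f i j) ring_monomial A m)%R.
Proof.
rewrite /eval_int summxE /paths big_flatten /= big_map.
by apply: eq_bigr => w _; rewrite prod_word_paths.
Qed.

End Paths.

Section RadixCode.
Variables (T : finType) (D : nat).

Definition radix_val (s : seq T) (c : T -> nat) :=
  foldr (fun v acc => c v + D * acc) 0 s.

Lemma radix_valD s c1 c2 :
  radix_val s (fun u => c1 u + c2 u) = radix_val s c1 + radix_val s c2.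
Proof. by elim: s => //= x s ->; rewrite mulnDr addnACA. Qed.

Lemma radix_val_inj s c1 c2 : 0 < D ->
  (forall v, c1 v < D) -> (forall v, c2 v < D) ->
  radix_val s c1 = radix_val s c2 -> {in s, c1 =1 c2}.
Proof.
move=> D_gt0 c1_lt c2_lt; elim: s => //= x s IHs eq_val v.
have eq_x : c1 x = c2 x.
  have := congr1 (modn^~ D) eq_val.
  by rewrite (addnC (c1 x)) (addnC (c2 x)) !(mulnC D) !modnMDl !modn_small.
move: eq_val; rewrite eq_x => /addnI /eqP; rewrite eqn_pmul2l // => /eqP eq_s.
by rewrite in_cons => /predU1P [-> //| /(IHs eq_s)].
Qed.

Definition mset_code (m : seq T) := radix_val (enum T) (fun u => count_mem u m).

Lemma mset_code_nil : mset_code [::] = 0.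
Proof. by rewrite /mset_code; elim: (enum T) => //= u s ->; rewrite muln0. Qed.

Lemma mset_code_cat m1 m2 : mset_code (m1 ++ m2) = mset_code m1 + mset_code m2.
Proof. by rewrite /mset_code -radix_valD; elim: (enum T) => //= u s ->; rewrite count_cat. Qed.

Lemma mset_code_inj m1 m2 : size m1 < D -> size m2 < D ->
  mset_code m1 = mset_code m2 -> perm_eq m1 m2.
Proof.
move=> m1_lt m2_lt eq_code; apply/allP => u _ /=; apply/eqP.
apply: (radix_val_inj _ _ _ eq_code); rewrite ?mem_enum //.
- exact: leq_ltn_trans (leq0n _) m1_lt.
- by move=> v; exact: leq_ltn_trans (count_size _ _) m1_lt.
- by move=> v; exact: leq_ltn_trans (count_size _ _) m2_lt.
Qed.

End RadixCode.

Lemma perm_big_fiber (T U : eqType) S (idx : S) (op : Monoid.com_law idx)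
    (E : T -> U) (F : T -> S) (M1 M2 : seq T) :
  {in M1 ++ M2 &, forall m1 m2, E m1 = E m2 -> F m1 = F m2} ->
  perm_eq (map E M1) (map E M2) ->
  \big[op/idx]_(m <- M1) F m = \big[op/idx]_(m <- M2) F m.
Proof.
elim: M1 M2 => [|m M1 IHM] M2 EF eqE.
  by case: M2 eqE {EF} => // m2 M2; rewrite perm_sym => /perm_nilP.
have [m2 m2M2 Em] : exists2 m2, m2 \in M2 & E m = E m2.
  by apply/mapP; rewrite -(perm_mem eqE) mem_head.
have M2_rem := perm_to_rem m2M2.
rewrite (perm_big _ M2_rem) !big_cons (EF m m2) ?mem_head ?mem_cat ?m2M2 ?orbT //.
congr (op _ _); apply: IHM.
  apply: sub_in2 EF => y; rewrite !mem_cat in_cons.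
  by case/orP => [-> | /mem_rem ->]; rewrite ?orbT.
by move: eqE; rewrite (permPr (perm_map E M2_rem)) /= Em perm_cons.
Qed.

Section PowerSums.
Local Open Scope ring_scope.
Import Num.Theory.

Lemma coef_sum_Xn (R : nzRingType) (s : seq nat) k :
  (\sum_(e <- s) 'X^e : {poly R})`_k = (count_mem k s)%:R.
Proof.
elim: s => [|e s IHs]; first by rewrite big_nil coef0.
by rewrite big_cons coefD coefXn IHs /= natrD eq_sym.
Qed.

(* The difference of the polynomials sum_e X^e has infinitely many roots, and
   its coefficients are the differences of multiplicities. *)
Lemma eq_power_sums_perm (s1 s2 : seq nat) :
  (forall t : int, \sum_(e <- s1) t ^+ e = \sum_(e <- s2) t ^+ e) ->
  perm_eq s1 s2.
Proof.
move=> eq_sums; pose P : {poly int} := \sum_(e <- s1) 'X^e - \sum_(e <- s2) 'X^e.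
have P0 : P = 0.
  apply: (@roots_geq_poly_eq0 _ P [seq k%:Z | k <- iota 0 (size P)]).
  - apply/allP => t _; rewrite /root /P hornerD hornerN !horner_sum.
    under eq_bigr do rewrite hornerXn.
    under [X in _ - X]eq_bigr do rewrite hornerXn.
    by rewrite eq_sums subrr.
  - by rewrite map_inj_uniq ?iota_uniq // => a b [].
  - by rewrite size_map size_iota.
apply/allP => k _ /=; apply/eqP.
have /eqP := congr1 (fun p : {poly int} => p`_k) P0.
by rewrite /P coefB !coef_sum_Xn coef0 subr_eq0 eqr_nat => /eqP.
Qed.

End PowerSums.

Lemma sum_sr_monomial_perm (R : csemiring_dagger) n (A : 'I_n -> 'I_n -> 'I_n -> R)
    D (M1 M2 : seq (seq (step n))) :
  {in M1 ++ M2, forall m, size m < D} ->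
  perm_eq (map (mset_code D) M1) (map (mset_code D) M2) ->
  \big[@oadd R/None]_(m <- M1) sr_monomial A m =
  \big[@oadd R/None]_(m <- M2) sr_monomial A m.
Proof.
move=> size_lt; apply: perm_big_fiber => m1 m2 m1M m2M eq_code.
by apply: perm_big; apply: mset_code_inj eq_code; apply: size_lt.
Qed.

Lemma int_identity_perm_mset_codes n (f g : free_nsr n) D i j :
  (forall A : 'I_n -> 'M[int]_n, (eval_int f A - eval_int g A = 0)%R) ->
  perm_eq (map (mset_code D) (paths f i j)) (map (mset_code D) (paths g i j)).
Proof.
move=> f_eq_g; apply: eq_power_sums_perm => t.
pose B (x : 'I_n) : 'M[int]_n := (\matrix_(a, b) t ^+ mset_code D [:: (x, a, b)])%R.
have monomialB m : ring_monomial B m = (t ^+ mset_code D m)%R.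
  elim: m => [|[[x a] b] m IHm]; first by rewrite /ring_monomial big_nil mset_code_nil.
  by rewrite /ring_monomial big_cons -/(ring_monomial B m) IHm mxE -exprD -mset_code_cat.
rewrite !big_map; under eq_bigr do rewrite -monomialB.
under [RHS]eq_bigr do rewrite -monomialB.
have /eqP := congr1 (fun M : 'M[int]_n => M i j) (f_eq_g B).
by rewrite !mxE subr_eq0 -!eval_int_paths => /eqP.
Qed.

Theorem theorem5p4 (n : nat) (f g : free_nsr n) :
  supp_disjoint f g ->
  (forall A : 'I_n -> 'M[int]_n, (eval_int f A - eval_int g A = 0)%R) ->
  forall R : csemiring_dagger, is_sr_identity R f g.
Proof.
move=> _ f_eq_g R A A' i j; rewrite /A' !eval_sr_paths.
pose D := (\max_(m <- paths f i j ++ paths g i j) size m).+1.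
apply: (@sum_sr_monomial_perm _ _ _ D).
  by move=> m mM; rewrite ltnS; exact: leq_bigmax_seq.
exact: int_identity_perm_mset_codes.
Qed.
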